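(* In the infinite-sites model described in the context, for every generation $\tau\ge 0$ the expected phenotypic mean and expected phenotypic variance satisfy \[ \bar G(\tau)=\Theta\int_0^\infty \alpha f(\alpha)\int_0^\tau\bigl(1-P_{\mathrm{lost}}([t],e^{s\alpha})\bigr)\,\gamma_1\bigl(a(t,e^{s\alpha},N)\bigr)\,dt\,d\alpha \] and \[ V_G(\tau)=\Theta\int_0^\infty \alpha^2 f(\alpha)\int_0^\tau\bigl(1-P_{\mathrm{lost}}([t],e^{s\alpha})\bigr)\,\gamma\bigl(a(t,e^{s\alpha},N)\bigr)\,dt\,d\alpha . \] In particular, $\Theta$ enters both quantities only as a multiplicative factor.
   Context: A haploid population of size $N$ starts monomorphic at generation $\tau=0$. For $\tau>0$, mutations occur at new sites (infinite sites) according to a Poisson process with rate $\Theta>0$ per generation, so the number of mutations in $(0,\tau]$ is Poisson with mean $\Theta\tau$; write $\mathrm{Poi}_{\Theta\tau}(n)=e^{-\Theta\tau}(\Theta\tau)^n/n!$. Each mutation has trait effect $\alpha>0$ drawn independently from a probability density $f$ on $(0,\infty)$ with finite moments, and fitness $\sigma=e^{s\alpha}$ with $s>0$. Sites are in linkage equilibrium (frequencies at different sites independent). For $\sigma>1$, consider a Galton–Watson process started from one individual with offspring mean $\sigma$; $P_{\mathrm{lost}}(n,\sigma)$ is the probability it is extinct by generation $n$ ($P_{\mathrm{lost}}(0,\sigma)=0$). $[t]$ is the integer part of $t$. $E_1(a)=\int_a^\infty x^{-1}e^{-x}dx$. For $a>0$, $g_a(x)=a(1-x)^{-2}\exp(-ax/(1-x))$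 on $[0,1)$, with $\gamma_1(a)=\int_0^1 x g_a(x)dx=1-ae^aE_1(a)$ and $\gamma(a)=\int_0^1x(1-x)g_a(x)dx=a(1+a)e^aE_1(a)-a$. Set $a(t,\sigma,N)=N(1-P_{\mathrm{lost}}([t],\sigma))\sigma^{-t}$. Given $n$ mutations in $(0,\tau]$ (arrival times distributed as a Poisson process conditioned on $n$ events), the $i$-th mutation, with effect $\alpha_i$ and arrival time $\tau_i$, has frequency $\tilde X^{(i)}_{\tau,e^{s\alpha_i},\Theta}$ in generation $\tau$, a random variable equal to $0$ with probability $P_{\mathrm{lost}}([\tau-\tau_i],e^{s\alpha_i})$ and otherwise having density $g_{a(\tau-\tau_i,e^{s\alpha_i},N)}$. The expected phenotypic mean and variance are defined by $\bar G(\tau)=\sum_{n\ge1}\mathrm{Poi}_{\Theta\tau}(n)\sum_{i=1}^n\int_0^\infty\alpha_i\,\mathbb E[\tilde X^{(i)}_{\tau,e^{s\alpha_i},\Theta}]f(\alpha_i)d\alpha_i$ and $V_G(\tau)=\sum_{n\ge1}\mathrm{Poi}_{\Theta\tau}(n)\sum_{i=1}^n\int_0^\infty\alpha_i^2\,\mathbb E[\tilde X^{(i)}_{\tau,e^{s\alpha_i},\Theta}(1-\tilde X^{(i)}_{\tau,e^{s\alpha_i},\Theta})]f(\alpha_i)d\alpha_i$. *)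

From HB Require Import structures.
From mathcomp Require Import all_boot all_order all_algebra.
From mathcomp Require Import all_classical all_reals all_analysis.
Set Implicit Arguments. Unset Strict Implicit. Unset Printing Implicit Defensive.
Import Order.TTheory GRing.Theory Num.Theory.
Import numFieldNormedType.Exports.
Local Open Scope classical_set_scope.
Local Open Scope ring_scope.

Section Model.
Variable R : realType.
Local Notation mu := (@lebesgue_measure R).

Definition offspring_law (p : nat -> R) (m : R) : Prop :=
  (forall k, 0 <= p k) /\
  series p @ \oo --> (1 : R) /\
  series (fun k => k%:R * p k) @ \oo --> (m : R).

Definition pgf (p : nat -> R) (x : R) : R := limn (series (fun k => p k * x ^+ k)).

(* Galton-Watson process started from one individual with offspring law
   off sigma (of mean sigma): probability of extinction by generation n,
   q_0 = 0, q_{n+1} = pgf(q_n). *)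
Definition Plost (off : R -> nat -> R) (n : nat) (sigma : R) : R :=
  iter n (pgf (off sigma)) 0.

Definition ipart (t : R) : nat := Num.truncn t.

Definition g (a x : R) : R := a * (1 - x) ^- 2 * expR (- (a * x / (1 - x))).

Definition gamma1 (a : R) : \bar R :=
  (\int[mu]_(x in [set x : R | (0 <= x < 1)%R]) (x * g a x)%:E)%E.
Definition gamma (a : R) : \bar R :=
  (\int[mu]_(x in [set x : R | (0 <= x < 1)%R]) (x * (1 - x) * g a x)%:E)%E.

Definition aa (off : R -> nat -> R) (t sigma : R) (N : nat) : R :=
  N%:R * (1 - Plost off (ipart t) sigma) * sigma `^ (- t).

Definition Poi (lam : R) (n : nat) : R := expR (- lam) * lam ^+ n / n`!%:R.

(* E[h(X)] for the frequency X in generation tau of a mutation with fitness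
   sigma that arose at time u: X = 0 with probability P_lost([tau-u],sigma),
   otherwise X has density g_{a(tau-u,sigma,N)}. *)
Definition EhX_given (off : R -> nat -> R) (N : nat) (h : R -> R)
    (tau sigma u : R) : \bar R :=
  ((Plost off (ipart (tau - u)) sigma * h 0)%:E +
   (1 - Plost off (ipart (tau - u)) sigma)%:E *
     \int[mu]_(x in [set x : R | (0 <= x < 1)%R])
        (h x * g (aa off (tau - u) sigma N) x)%:E)%E.

(* E[h(X^(i))] where, given n mutations in (0,tau], the arrival time tau_i of
   (a label-uniformly chosen) mutation i is uniform on (0,tau]. *)
Definition EhX (off : R -> nat -> R) (N : nat) (h : R -> R)
    (tau sigma : R) : \bar R :=
  ((tau^-1)%:E *
   \int[mu]_(u in [set u : R | (0 < u <= tau)%R]) EhX_given off N h tau sigma u)%E.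

Definition moment_sum (off : R -> nat -> R) (N : nat) (Theta s : R)
    (f : R -> R) (k : nat) (h : R -> R) (tau : R) : \bar R :=
  (\sum_(1 <= n <oo)
     (Poi (Theta * tau) n)%:E *
     \sum_(i < n)
       \int[mu]_(alpha in [set alpha : R | (0 < alpha)%R])
          ((alpha ^+ k)%:E * EhX off N h tau (expR (s * alpha)) * (f alpha)%:E))%E.

Definition Gbar off N Theta s f tau := moment_sum off N Theta s f 1 id tau.
Definition VG off N Theta s f tau :=
  moment_sum off N Theta s f 2 (fun x => x * (1 - x)) tau.

End Model.

From HB Require Import structures.
From mathcomp Require Import all_boot all_order all_algebra.
From mathcomp Require Import all_classical all_reals all_analysis.
From mathcomp Require Import lra ring.
Import Order.TTheory GRing.Theory Num.Theory.
Import numFieldNormedType.Exports.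
Local Open Scope classical_set_scope.
Local Open Scope ring_scope.

(* Conditionally on n arrivals, each of the n mutations contributes the same
   expectation I, so the n-th term of the Poisson sum is n Poi_{Theta tau}(n) I
   and the mean of the Poisson law sums the series to Theta tau I.  In I the
   arrival time u is uniform on (0, tau]: its density 1/tau cancels the factor
   tau, and the substitution t = tau - u replaces the arrival time by the age
   t in [0, tau] of the mutation.  Both h(x) = x and h(x) = x(1 - x) vanish at
   0, so lost mutations contribute nothing.
   None of the integrands is known to be measurable, so the substitution and
   the extraction of the constant 1/tau are proved for arbitrary integrands,
   from the definition of the integral as a supremum over simple functions. *)

Lemma gt0_muleBr (R : realDomainType) (c : R) (x y : \bar R) : 0 < c ->
  (c%:E * (x - y) = c%:E * x - c%:E * y)%E.
Proof.
move=> c0; case: x => [x| |]; case: y => [y| |] //=.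
all: try by rewrite -!EFinD -!EFinM mulrDr mulrN.
all: by rewrite /= ?(gt0_muley (x:=c%:E)) ?(gt0_muleNy (x:=c%:E)) ?lte_fin.
Qed.

Section nnintegral.
Local Open Scope ereal_scope.
Context {d : measure_display} {T : measurableType d} {R : realType}.
Variable mu : {measure set T -> \bar R}.
Implicit Types (F G : T -> \bar R) (D : set T).
Import HBNNSimple.

(* The library's local [nnintegral]: [\int] unfolds to it by conversion. *)
Definition nnintegral F := ereal_sup [set sintegral mu h |
  h in [set h : {nnsfun T >-> R} | forall x, (h x)%:E <= F x]].

Lemma integral_nnintegralE D F :
  \int[mu]_(x in D) F x = nnintegral ((F \_ D)^\+) - nnintegral ((F \_ D)^\-).
Proof. by []. Qed.

Lemma le_nnintegral F G :
  (forall h : {nnsfun T >-> R}, (forall x, (h x)%:E <= F x) ->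
    exists2 h' : {nnsfun T >-> R}, (forall x, (h' x)%:E <= G x) &
      sintegral mu h <= sintegral mu h') ->
  nnintegral F <= nnintegral G.
Proof.
move=> FG; apply: ge_ereal_sup => _ [h hF <-].
have [h' h'G le_hh'] := FG h hF.
by apply: le_trans le_hh' _; apply: ereal_sup_ubound; exists h'.
Qed.

Lemma nnintegralZl_le c F : (0 < c)%R ->
  nnintegral (fun x => c%:E * F x) <= c%:E * nnintegral F.
Proof.
move=> c0; apply: ge_ereal_sup => _ [h hF <-].
have ci0 : (0 <= c^-1)%R by rewrite invr_ge0 ltW.
pose h' := scale_nnsfun h ci0.
have -> : sintegral mu h = c%:E * sintegral mu h'.
  by rewrite sintegralrM muleA -EFinM mulfV ?gt_eqF// mul1e.
apply: lee_wpmul2l; first by rewrite lee_fin ltW.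
apply: ereal_sup_ubound; exists h' => // x /=.
by rewrite -(@lee_pmul2l _ c%:E) ?lte_fin// EFinM muleA -EFinM mulfV ?gt_eqF// mul1r.
Qed.

Lemma nnintegralZl c F : (0 < c)%R ->
  nnintegral (fun x => c%:E * F x) = c%:E * nnintegral F.
Proof.
move=> c0; apply/eqP; rewrite eq_le nnintegralZl_le//=.
have := @nnintegralZl_le c^-1%R (fun x => c%:E * F x); rewrite invr_gt0 => /(_ c0).
under eq_fun do rewrite muleA -EFinM mulVf ?gt_eqF// mul1e.
move=> /(lee_wpmul2l (x := c%:E)); rewrite lee_fin ltW// => /(_ isT).
by rewrite muleA -EFinM mulfV ?gt_eqF// mul1e.
Qed.

Lemma integralZl_gt0 c D F : (0 < c)%R ->
  \int[mu]_(x in D) (c%:E * F x) = c%:E * \int[mu]_(x in D) F x.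
Proof.
move=> c0; rewrite !integral_nnintegralE gt0_muleBr// -!nnintegralZl//.
congr (nnintegral _ - nnintegral _); apply/funext => x;
  rewrite ?funeposE ?funenegE /patch; case: ifP => _;
  by rewrite ?oppe0 -?muleN maxe_pMr// ?lee_fin ?ltW// ?mule0.
Qed.

Lemma nnintegral_nullset N F G : measurable N -> mu N = 0 ->
  (forall x, ~ N x -> F x = G x) -> (forall x, 0 <= G x) ->
  nnintegral F <= nnintegral G.
Proof.
move=> mN muN0 FG G0; apply: le_nnintegral => h hF.
have mNC : measurable (~` N) by exact: measurableC.
exists (proj_nnsfun h mNC).
  move=> x /=; rewrite measurable_realfun.mindicE.
  have [Nx|NNx] := pselect (N x).
    by rewrite memNset ?mulr0//=.
  by rewrite mem_set// mulr1 -FG.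
rewrite -mrestrict -integral_nnsfun// -integralT_nnsfun.
rewrite (ge0_negligible_integral _ _ _ _ muN0)// ?setTD// => [|x _].
  exact/measurable_realfun.measurable_EFinP.
by rewrite lee_fin.
Qed.

Lemma integral_nullset N D D' F : measurable N -> mu N = 0 ->
  (forall x, ~ N x -> D x <-> D' x) ->
  \int[mu]_(x in D) F x = \int[mu]_(x in D') F x.
Proof.
move=> mN muN0 DD'; rewrite !integral_nnintegralE.
have eqF x : ~ N x -> (F \_ D) x = (F \_ D') x.
  by move=> NNx; rewrite /patch (_ : (x \in D) = (x \in D'))//; apply/idP/idP;
    rewrite !inE => /(DD' x NNx).
by congr (_ - _); apply/eqP; rewrite eq_le;
  apply/andP; split; apply: (nnintegral_nullset _ _ _ mN muN0) => x;
  rewrite ?funepos_ge0 ?funeneg_ge0// => /eqF; rewrite ?funeposE ?funenegE => ->.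
Qed.

Section measure_preserving_involution.
Variable phi : T -> T.
Hypothesis mphi : measurable_fun setT phi.
Hypothesis phiK : involutive phi.
Hypothesis measure_preimage : forall A, measurable A -> mu (phi @^-1` A) = mu A.

Section comp_nnsfun.
Variable h : {nnsfun T >-> R}.

Definition comp_nnsfun_fun (x : T) : R := h (phi x).

Let measurable_comp : measurable_fun setT comp_nnsfun_fun.
Proof. exact: measurableT_comp. Qed.
HB.instance Definition _ :=
  isMeasurableFun.Build _ _ T R comp_nnsfun_fun measurable_comp.

Let comp_fimfun : @FiniteImage T R comp_nnsfun_fun.
Proof. by split; apply: sub_finite_set (fimfunP h) => _ [x _ <-]; exists (phi x). Qed.
HB.instance Definition _ := comp_fimfun.

Let comp_nnfun : @isNonNegFun T R comp_nnsfun_fun.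
Proof. by split => x; exact: fun_ge0. Qed.
HB.instance Definition _ := comp_nnfun.

Definition comp_nnsfun : {nnsfun T >-> R} := comp_nnsfun_fun.

Lemma sintegral_comp : sintegral mu comp_nnsfun = sintegral mu h.
Proof.
apply: eq_fsbigr => r _; congr (_ * _).
by rewrite -[RHS]measure_preimage//; exact: measurable_funPTI.
Qed.

End comp_nnsfun.

Lemma nnintegral_comp F : nnintegral (F \o phi) = nnintegral F.
Proof.
apply/eqP; rewrite eq_le; apply/andP; split; apply: le_nnintegral => h hF;
  exists (comp_nnsfun h); rewrite ?sintegral_comp// => x /=.
  by have := hF (phi x); rewrite /= phiK.
exact: hF.
Qed.

Lemma integral_comp D F :
  \int[mu]_(x in D) F (phi x) = \int[mu]_(x in phi @^-1` D) F x.
Proof.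
rewrite !integral_nnintegralE.
have -> : (fun x => F (phi x)) \_ D = (F \_ (phi @^-1` D)) \o phi.
  by apply/funext => x; rewrite /patch/= (_ : (phi x \in _) = (x \in D))//;
    apply/idP/idP; rewrite !inE/= ?phiK.
by rewrite funepos_comp funeneg_comp !nnintegral_comp.
Qed.

End measure_preserving_involution.

End nnintegral.

Section mirror.
Context (R : realType) (t : R).
Local Notation mu := (@lebesgue_measure R).

Definition mirror (u : R) : R := t - u.

Lemma mirrorK : involutive mirror.
Proof. by move=> u; rewrite /mirror subKr. Qed.

Lemma measurable_mirror : measurable_fun setT mirror.
Proof. exact: measurable_realfun.measurable_funB. Qed.

Lemma lebesgue_measure_mirror A : measurable A -> mu (mirror @^-1` A) = mu A.
Proof.
move=> mA; change (pushforward mu (mirror : R -> measurableTypeR R) A = mu A).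
apply/esym/lebesgue_measure_unique; [exact: measurable_mirror| |exact: mA].
move=> _ _ [[a b] _ <-] /=; rewrite /pushforward.
have -> : mirror @^-1` `]a, b] = `[t - b, t - a[%classic.
  by apply/seteqP; split => u; rewrite /= /mirror !in_itv/= => /andP[? ?];
    apply/andP; split; lra.
rewrite !lebesgue_measure_itv/= !lte_fin ltrD2l ltrN2.
by case: ifP => // _; congr (_%:E); lra.
Qed.

Lemma integral_mirror D (F : R -> \bar R) :
  (\int[mu]_(u in D) F (t - u)%R = \int[mu]_(x in [set x | D (t - x)%R]) F x)%E.
Proof. exact: integral_comp mu _ measurable_mirror mirrorK lebesgue_measure_mirror D F. Qed.

End mirror.

Lemma integral_mirror_itv (R : realType) (t : R) (F : R -> \bar R) : 0 <= t ->
  (\int[lebesgue_measure]_(u in [set u : R | (0 < u <= t)%R]) F (t - u)%R =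
   \int[lebesgue_measure]_(x in [set x : R | (0 <= x <= t)%R]) F x)%E.
Proof.
move=> t0; rewrite integral_mirror.
apply: (integral_nullset lebesgue_measure [set t] _ _ _ (measurable_set1 t)
  (lebesgue_measure_set1 t)).
move=> x /= /eqP; rewrite neq_lt => /orP xt.
by split => /andP[? ?]; apply/andP; split; lra.
Qed.

Lemma Poi_ge0 (R : realType) (lam : R) n : 0 <= lam -> 0 <= Poi lam n.
Proof. by move=> lam0; rewrite /Poi !mulr_ge0 ?expR_ge0 ?exprn_ge0. Qed.

Lemma cvg_Poi_mean (R : realType) (lam : R) :
  (fun m => \sum_(1 <= n < m) n%:R * Poi lam n) @ \oo --> lam.
Proof.
have PoiS m : \sum_(1 <= n < m.+1) n%:R * Poi lam n =
    lam * expR (- lam) * series (exp_coeff lam) m.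
  rewrite big_add1/= /series/= big_distrr/=; apply: eq_bigr => n _.
  rewrite /Poi exp_coeffE factS natrM exprS.
  by field; rewrite nat1r !pnatr_eq0 -!lt0n fact_gt0.
rewrite -cvg_shiftS (eq_fun PoiS).
have := cvgMl_tmp (a := lam * expR (- lam)) (is_cvg_series_exp_coeff lam).
rewrite -/(expR lam) -mulrA -expRD addNr expR0 mulr1.
exact.
Qed.

Lemma eseries_Poi_mean (R : realType) (lam : R) (I : \bar R) : 0 < lam ->
  (\sum_(1 <= n <oo) (n%:R * Poi lam n)%:E * I = lam%:E * I)%E.
Proof.
move=> lam0; apply/cvg_lim => //.
have sumEFinMl m : (\sum_(1 <= n < m) (n%:R * Poi lam n)%:E * I =
    (\sum_(1 <= n < m) n%:R * Poi lam n)%:E * I)%E.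
  rewrite -sumEFin ge0_sume_distrl// => n _.
  by rewrite lee_fin mulr_ge0// Poi_ge0// ltW.
under eq_fun do rewrite sumEFinMl.
apply: cvgeM; last exact: cvg_cst.
- by case: I {sumEFinMl} => [r| |]//; rewrite /mule_def/= gt_eqF.
- by apply: cvg_EFin; [exact: nearW | exact: cvg_Poi_mean].
Qed.

Section infinite_sites.
Variables (R : realType) (off : R -> nat -> R) (N : nat) (h : R -> R).
Hypothesis h0 : h 0 = 0.
Local Notation mu := (@lebesgue_measure R).
Local Open Scope ereal_scope.

Definition moment_at_age (t sigma : R) : \bar R :=
  (1 - Plost off (ipart t) sigma)%:E *
  \int[mu]_(x in [set x : R | (0 <= x < 1)%R]) (h x * g (aa off t sigma N) x)%:E.

Lemma EhXE (tau sigma : R) : (0 <= tau)%R ->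
  EhX off N h tau sigma = (tau^-1)%:E *
    \int[mu]_(t in [set t : R | (0 <= t <= tau)%R]) moment_at_age t sigma.
Proof.
move=> tau0; rewrite /EhX -integral_mirror_itv//; congr (_ * _).
by apply: eq_integral => u _; rewrite /EhX_given h0 mulr0 add0e.
Qed.

Lemma moment_sum0 Theta s f k : moment_sum off N Theta s f k h 0 = 0.
Proof.
rewrite /moment_sum eseries0// => -[|n]// _ _.
by rewrite /Poi mulr0 expr0n/= mulr0 mul0r mul0e.
Qed.

Lemma moment_sumE Theta s f k tau : (0 < Theta)%R -> (0 <= tau)%R ->
  moment_sum off N Theta s f k h tau =
  Theta%:E * \int[mu]_(alpha in [set alpha : R | (0 < alpha)%R])
    ((alpha ^+ k * f alpha)%:E *
     \int[mu]_(t in [set t : R | (0 <= t <= tau)%R])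
       moment_at_age t (expR (s * alpha))).
Proof.
move=> Theta0; rewrite le_eqVlt => /predU1P[<-|tau0].
  rewrite moment_sum0 (eq_integral (fun=> 0)) ?integral0 ?mule0// => alpha _.
  by rewrite (integral_Sset1 0%R) ?mule0// => t /= /le_anti.
pose I := \int[mu]_(alpha in [set alpha : R | (0 < alpha)%R])
  ((alpha ^+ k)%:E * EhX off N h tau (expR (s * alpha)) * (f alpha)%:E).
have sum_const n : (Poi (Theta * tau) n)%:E * \sum_(i < n) I =
    (n%:R * Poi (Theta * tau) n)%:E * I.
  have -> : (\sum_(i < n) I) = n%:R%:E * I by rewrite mule_natl sumr_const card_ord.
  by rewrite muleA -EFinM mulrC.
rewrite /moment_sum -/I; under eq_eseriesr do rewrite sum_const.
rewrite eseries_Poi_mean ?mulr_gt0// EFinM -muleA; congr (_ * _).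
have -> : I = (tau^-1)%:E * \int[mu]_(alpha in [set alpha : R | (0 < alpha)%R])
    ((alpha ^+ k * f alpha)%:E *
     \int[mu]_(t in [set t : R | (0 <= t <= tau)%R]) moment_at_age t (expR (s * alpha))).
  rewrite -integralZl_gt0 ?invr_gt0//; apply: eq_integral => alpha _.
  by rewrite EhXE ?ltW// EFinM muleCA -muleA muleAC.
by rewrite muleA -EFinM mulfV ?gt_eqF// mul1e.
Qed.

End infinite_sites.

Theorem mainTheorem1 (R : realType) (N : nat) (Theta s : R) (f : R -> R)
    (off : R -> nat -> R) :
  (0 < N)%N -> 0 < Theta -> 0 < s ->
  (* f is a probability density on (0, oo) with finite moments *)
  (forall alpha, 0 < alpha -> 0 <= f alpha) ->
  measurable_fun [set alpha : R | (0 < alpha)%R] f ->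
  (\int[@lebesgue_measure R]_(alpha in [set alpha : R | (0 < alpha)%R]) (f alpha)%:E
     = 1)%E ->
  (forall k : nat,
     (\int[@lebesgue_measure R]_(alpha in [set alpha : R | (0 < alpha)%R])
        (alpha ^+ k * f alpha)%:E < +oo)%E) ->
  (* Galton-Watson offspring laws: off sigma has mean sigma (sigma > 1),
     depending measurably on sigma *)
  (forall sigma, 1 < sigma -> offspring_law (off sigma) sigma) ->
  (forall k, measurable_fun [set sigma : R | 1 < sigma] (fun sigma => off sigma k)) ->
  forall tau : R, 0 <= tau ->
    Gbar off N Theta s f tau =
      (Theta%:E *
       \int[@lebesgue_measure R]_(alpha in [set alpha : R | (0 < alpha)%R])
         ((alpha * f alpha)%:E *
          \int[@lebesgue_measure R]_(t in [set t : R | (0 <= t <= tau)%R])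
            ((1 - Plost off (ipart t) (expR (s * alpha)))%:E *
             gamma1 (aa off t (expR (s * alpha)) N))))%E
    /\
    VG off N Theta s f tau =
      (Theta%:E *
       \int[@lebesgue_measure R]_(alpha in [set alpha : R | (0 < alpha)%R])
         ((alpha ^+ 2 * f alpha)%:E *
          \int[@lebesgue_measure R]_(t in [set t : R | (0 <= t <= tau)%R])
            ((1 - Plost off (ipart t) (expR (s * alpha)))%:E *
             gamma (aa off t (expR (s * alpha)) N))))%E.
Proof.
move=> _ Theta0 _ _ _ _ _ _ _ tau tau0; split.
- by rewrite /Gbar moment_sumE.
- by rewrite /VG moment_sumE// mul0r.
Qed.
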